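(* Let $\mathcal{D}$ be a planar disk, regarded as a domain of $\mathbb{C}_{-1}$ with split-complex coordinate $z$, and let $A:\mathcal{D}\to\mathbb{C}_{-1}$ be a split-holomorphic function with $A_z=H^2$ for some split-holomorphic function $H:\mathcal{D}\to\mathbb{C}_{-1}$. If $z_0\in\mathcal{D}$ is an isolated zero of $H$, then the indefinite improper affine map $$\psi=-\tfrac12\,\mathrm{Im}\!\int(\Phi+\overline\Phi)\times d\Phi,\qquad \Phi(z)=(jz,\,A(z),\,1),$$ is well defined on $\mathcal{D}^*=\mathcal{D}\setminus\{z_0\}$ and has a non-removable isolated singularity at $z_0$.
   Context: $\mathbb{C}_{-1}=\{s+jt: s,t\in\mathbb{R}\}$ with $j^2=1$ (split-complex numbers), conjugation $\overline{s+jt}=s-jt$, $\mathrm{Im}(s+jt)=t$; split-holomorphic functions are those satisfying the split-complex Cauchy–Riemann equations, i.e. depending only on $z=s+jt$, with derivative $A_z$. Operations on $\mathbb{C}_{-1}^3$-valued curves ($\times$ = cross product, conjugation, $\mathrm{Im}$) are taken componentwise. An indefinite improper affine map is a surface locally given as the graph of a solution of $u_{xx}u_{yy}-u_{xy}^2=-1$ (affine normal $(0,0,1)$), allowed to have singular points where the affine metric degenerates but the affine conormal is well defined; $\Phi=N+j\,\xi\times\psi$ with $N$ the affine conormal. A non-removable isolated singularity at $z_0$ means $\psi$ does not extend to $z_0$ as a regular improper affine sphere (locally a graph of a $C^2$ solution of the Hessian equation). *)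

From Stdlib Require Import Reals.
Open Scope R_scope.

(** * Split-complex numbers  C_{-1} = { s + j t }, j^2 = 1,
    represented as pairs (s, t). *)
Definition SC := (R * R)%type.
Definition sc_add (a b : SC) : SC := (fst a + fst b, snd a + snd b).
(* (s1 + j t1)(s2 + j t2) = s1 s2 + t1 t2 + j (s1 t2 + t1 s2) since j^2 = 1 *)
Definition sc_mul (a b : SC) : SC :=
  (fst a * fst b + snd a * snd b, fst a * snd b + snd a * fst b).
Definition sc_conj (a : SC) : SC := (fst a, - snd a).
Definition sc_Im (a : SC) : R := snd a.
Definition sc_j : SC := (0, 1).
Definition sc_of_R (x : R) : SC := (x, 0).
Definition sc_zero : SC := (0, 0).

Definition SC3 := (SC * SC * SC)%type.
Definition v1 (v : SC3) : SC := fst (fst v).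
Definition v2 (v : SC3) : SC := snd (fst v).
Definition v3 (v : SC3) : SC := snd v.
Definition sc3_add (x y : SC3) : SC3 :=
  (sc_add (v1 x) (v1 y), sc_add (v2 x) (v2 y), sc_add (v3 x) (v3 y)).
Definition sc3_conj (x : SC3) : SC3 := (sc_conj (v1 x), sc_conj (v2 x), sc_conj (v3 x)).
Definition sc3_scale (w : SC) (x : SC3) : SC3 :=
  (sc_mul (v1 x) w, sc_mul (v2 x) w, sc_mul (v3 x) w).
Definition sc_sub (a b : SC) : SC := (fst a - fst b, snd a - snd b).
Definition sc3_cross (x y : SC3) : SC3 :=
  (sc_sub (sc_mul (v2 x) (v3 y)) (sc_mul (v3 x) (v2 y)),
   sc_sub (sc_mul (v3 x) (v1 y)) (sc_mul (v1 x) (v3 y)),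
   sc_sub (sc_mul (v1 x) (v2 y)) (sc_mul (v2 x) (v1 y))).

Definition R3 := (R * R * R)%type.
Definition r1 (p : R3) : R := fst (fst p).
Definition r2 (p : R3) : R := snd (fst p).
Definition r3 (p : R3) : R := snd p.
Definition sc3_Im (x : SC3) : R3 := (sc_Im (v1 x), sc_Im (v2 x), sc_Im (v3 x)).
Definition r3_scale (c : R) (p : R3) : R3 := (c * r1 p, c * r2 p, c * r3 p).

Definition diff2 (f : R -> R -> R) (s t fs ft : R) : Prop :=
  forall eps, 0 < eps -> exists delta, 0 < delta /\
    forall h k, Rabs h < delta -> Rabs k < delta ->
      Rabs (f (s + h) (t + k) - f s t - fs * h - ft * k) <= eps * (Rabs h + Rabs k).

Definition cont2_at (f : R -> R -> R) (x y : R) : Prop :=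
  forall eps, 0 < eps -> exists delta, 0 < delta /\
    forall h k, Rabs h < delta -> Rabs k < delta -> Rabs (f (x + h) (y + k) - f x y) < eps.

Definition open2 (Om : R -> R -> Prop) : Prop :=
  forall x y, Om x y -> exists r, 0 < r /\
    forall h k, Rabs h < r -> Rabs k < r -> Om (x + h) (y + k).

(* F = u + j v satisfies the split Cauchy-Riemann equations u_s = v_t,
   u_t = v_s on D, and F' = u_s + j v_s is its derivative F_z. *)
Definition split_holo_deriv (D : SC -> Prop) (F F' : SC -> SC) : Prop :=
  forall z, D z ->
    diff2 (fun s t => fst (F (s, t))) (fst z) (snd z) (fst (F' z)) (snd (F' z)) /\
    diff2 (fun s t => snd (F (s, t))) (fst z) (snd z) (snd (F' z)) (fst (F' z)).

Definition split_holomorphic (D : SC -> Prop) (F : SC -> SC) : Prop :=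
  exists F', split_holo_deriv D F F'.

Definition in_disk (c : SC) (r : R) (z : SC) : Prop :=
  (fst z - fst c) ^ 2 + (snd z - snd c) ^ 2 < r ^ 2.

Definition isolated_zero (D : SC -> Prop) (H : SC -> SC) (z0 : SC) : Prop :=
  D z0 /\ H z0 = sc_zero /\
  exists r, 0 < r /\ forall z, D z -> in_disk z0 r z -> z <> z0 -> H z <> sc_zero.

Definition Phi (A : SC -> SC) (z : SC) : SC3 := (sc_mul sc_j z, A z, sc_of_R 1).
(* Phi_z(z) = (j, A_z(z), 0), where A' is the split derivative A_z of A *)
Definition Phi_z (A' : SC -> SC) (z : SC) : SC3 := (sc_j, A' z, sc_of_R 0).

(* The R^3-valued 1-form  omega = -1/2 Im ((Phi + conj Phi) x dPhi),
   dPhi = Phi_z dz, dz = ds + j dt.  omega_s / omega_t are its values on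
   d/ds and d/dt. *)
Definition omega_dir (A A' : SC -> SC) (w : SC) (z : SC) : R3 :=
  r3_scale (- / 2)
    (sc3_Im (sc3_cross (sc3_add (Phi A z) (sc3_conj (Phi A z)))
                       (sc3_scale w (Phi_z A' z)))).
Definition omega_s A A' z := omega_dir A A' (sc_of_R 1) z.
Definition omega_t A A' z := omega_dir A A' sc_j z.

(* psi is a primitive of omega on the domain U, i.e. psi = -1/2 Im int (Phi+conj Phi) x dPhi
   is a well-defined (single valued) map on U. *)
Definition is_psi (U : SC -> Prop) (A A' : SC -> SC) (psi : SC -> R3) : Prop :=
  forall z, U z ->
    diff2 (fun s t => r1 (psi (s, t))) (fst z) (snd z) (r1 (omega_s A A' z)) (r1 (omega_t A A' z)) /\
    diff2 (fun s t => r2 (psi (s, t))) (fst z) (snd z) (r2 (omega_s A A' z)) (r2 (omega_t A A' z)) /\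
    diff2 (fun s t => r3 (psi (s, t))) (fst z) (snd z) (r3 (omega_s A A' z)) (r3 (omega_t A A' z)).

(** * Regular improper affine spheres (graphs of C^2 solutions of
      u_xx u_yy - u_xy^2 = -1) *)
Definition hessian_solution (Om : R -> R -> Prop) (u : R -> R -> R) : Prop :=
  exists ux uy uxx uxy uyx uyy : R -> R -> R,
    forall x y, Om x y ->
      diff2 u x y (ux x y) (uy x y) /\
      diff2 ux x y (uxx x y) (uxy x y) /\
      diff2 uy x y (uyx x y) (uyy x y) /\
      cont2_at uxx x y /\ cont2_at uxy x y /\ cont2_at uyx x y /\ cont2_at uyy x y /\
      uxx x y * uyy x y - (uxy x y) ^ 2 = -1.

(* psi : U -> R^3 (U a domain punctured at z0) extends to z0 as a regular
   improper affine sphere: near z0, psi together with its limit value p0 at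
   z0 lies on the graph of a C^2 solution u of the Hessian equation over an
   open set Om containing the projection of p0. *)
Definition removable_at (U : SC -> Prop) (psi : SC -> R3) (z0 : SC) : Prop :=
  exists r (p0 : R3) (Om : R -> R -> Prop) (u : R -> R -> R),
    0 < r /\ open2 Om /\ hessian_solution Om u /\
    Om (r1 p0) (r2 p0) /\ r3 p0 = u (r1 p0) (r2 p0) /\
    (forall eps, 0 < eps -> exists delta, 0 < delta /\
       forall z, U z -> in_disk z0 delta z ->
         Rabs (r1 (psi z) - r1 p0) < eps /\ Rabs (r2 (psi z) - r2 p0) < eps /\
         Rabs (r3 (psi z) - r3 p0) < eps) /\
    (forall z, U z -> in_disk z0 r z ->
       Om (r1 (psi z)) (r2 (psi z)) /\ r3 (psi z) = u (r1 (psi z)) (r2 (psi z))).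

Definition nonremovable_singularity (U : SC -> Prop) (psi : SC -> R3) (z0 : SC) : Prop :=
  ~ removable_at U psi z0.

From Stdlib Require Import Reals Lra Psatz.
From Coquelicot Require Import Coquelicot.
Open Scope R_scope.

(* In the null coordinates [s + t] and [s - t] a split-holomorphic function
   decouples: [fst A + snd A] depends only on [s + t] and [fst A - snd A] only
   on [s - t].  Integrating these two one-variable functions yields a primitive
   [G] of [fst A ds + snd A dt] on the whole disk, and then
   [psi = (snd A, -s, -t snd A + G)] is a primitive of the form
   [-1/2 Im ((Phi + conj Phi) x dPhi)].

   For non-removability, follow the vertical segment above [z0]: along it the
   first coordinate of [psi] moves with speed [|H|^2 -> 0], the second one is
   constant, and the third moves with speed [-t |H|^2].  If [psi] lay on the
   graph of a [C^2] function [u], the chain rule would force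
   [u_x (psi_1, psi_2) = -t]; but [psi_1] moves only by [o(t - t0)] while [-t]
   moves by [t - t0], contradicting the differentiability of [u_x] at the
   limit point. *)

Lemma diff2_eq f s t fs ft fs' ft' :
  fs = fs' -> ft = ft' -> diff2 f s t fs ft -> diff2 f s t fs' ft'.
Proof. now intros -> ->. Qed.

Lemma diff2_ext f g s t fs ft :
  (forall x y, f x y = g x y) -> diff2 f s t fs ft -> diff2 g s t fs ft.
Proof.
intros E Df eps Heps. destruct (Df eps Heps) as [d [Hd K]].
exists d; split; [exact Hd|]. intros h k Hh Hk. rewrite <- !E. now apply K.
Qed.

Lemma diff2_linear a b s t : diff2 (fun x y => a * x + b * y) s t a b.
Proof.
intros eps Heps. exists 1; split; [lra|]. intros h k _ _.
replace (a * (s + h) + b * (t + k) - (a * s + b * t) - a * h - b * k) with 0 by ring.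
rewrite Rabs_R0. pose proof (Rabs_pos h); pose proof (Rabs_pos k); nra.
Qed.

Lemma diff2_plus f g s t fs ft gs gt :
  diff2 f s t fs ft -> diff2 g s t gs gt ->
  diff2 (fun x y => f x y + g x y) s t (fs + gs) (ft + gt).
Proof.
intros Df Dg eps Heps.
destruct (Df (eps / 2)) as [d1 [Hd1 K1]]; [lra|].
destruct (Dg (eps / 2)) as [d2 [Hd2 K2]]; [lra|].
exists (Rmin d1 d2); split; [now apply Rmin_glb_lt|].
intros h k Hh Hk.
pose proof (Rmin_l d1 d2); pose proof (Rmin_r d1 d2).
specialize (K1 h k ltac:(lra) ltac:(lra)); specialize (K2 h k ltac:(lra) ltac:(lra)).
replace (f (s + h) (t + k) + g (s + h) (t + k) - (f s t + g s t) - (fs + gs) * h - (ft + gt) * k)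
  with ((f (s + h) (t + k) - f s t - fs * h - ft * k)
        + (g (s + h) (t + k) - g s t - gs * h - gt * k)) by ring.
eapply Rle_trans; [apply Rabs_triang | lra].
Qed.

Lemma diff2_scal c f s t fs ft :
  diff2 f s t fs ft -> diff2 (fun x y => c * f x y) s t (c * fs) (c * ft).
Proof.
intros Df eps Heps.
assert (Hc : 0 < Rabs c + 1) by (pose proof (Rabs_pos c); lra).
destruct (Df (eps / (Rabs c + 1))) as [d [Hd K]]; [now apply Rdiv_lt_0_compat|].
exists d; split; [exact Hd|]. intros h k Hh Hk. specialize (K h k Hh Hk).
replace (c * f (s + h) (t + k) - c * f s t - c * fs * h - c * ft * k)
  with (c * (f (s + h) (t + k) - f s t - fs * h - ft * k)) by ring.
rewrite Rabs_mult.
apply Rle_trans with ((Rabs c + 1) * (eps / (Rabs c + 1) * (Rabs h + Rabs k))).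
- pose proof (Rabs_pos (f (s + h) (t + k) - f s t - fs * h - ft * k)).
  pose proof (Rabs_pos h); pose proof (Rabs_pos k); nra.
- right; field; lra.
Qed.

Lemma diff2_local_lipschitz f s t fs ft : diff2 f s t fs ft ->
  exists d, 0 < d /\ forall h k, Rabs h < d -> Rabs k < d ->
    Rabs (f (s + h) (t + k) - f s t) <= (Rabs fs + Rabs ft + 1) * (Rabs h + Rabs k).
Proof.
intros Df. destruct (Df 1) as [d [Hd K]]; [lra|]. exists d; split; [exact Hd|].
intros h k Hh Hk. specialize (K h k Hh Hk).
replace (f (s + h) (t + k) - f s t)
  with ((f (s + h) (t + k) - f s t - fs * h - ft * k) + (fs * h + ft * k)) by ring.
eapply Rle_trans; [apply Rabs_triang|].
eapply Rle_trans; [apply Rplus_le_compat; [exact K | apply Rabs_triang]|].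
rewrite !Rabs_mult.
pose proof (Rabs_pos fs); pose proof (Rabs_pos ft); pose proof (Rabs_pos h); pose proof (Rabs_pos k).
nra.
Qed.

Lemma diff2_mult f g s t fs ft gs gt :
  diff2 f s t fs ft -> diff2 g s t gs gt ->
  diff2 (fun x y => f x y * g x y) s t
    (fs * g s t + f s t * gs) (ft * g s t + f s t * gt).
Proof.
intros Df Dg eps Heps.
destruct (diff2_local_lipschitz f s t fs ft Df) as [df [Hdf Lf]].
destruct (diff2_local_lipschitz g s t gs gt Dg) as [dg [Hdg Lg]].
set (Cf := Rabs fs + Rabs ft + 1) in Lf. set (Cg := Rabs gs + Rabs gt + 1) in Lg.
set (Mf := Rabs (f s t) + 1). set (Mg := Rabs (g s t) + 1).
assert (HCf : 0 < Cf) by (unfold Cf; pose proof (Rabs_pos fs); pose proof (Rabs_pos ft); lra).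
assert (HCg : 0 < Cg) by (unfold Cg; pose proof (Rabs_pos gs); pose proof (Rabs_pos gt); lra).
assert (HMf : 0 < Mf) by (unfold Mf; pose proof (Rabs_pos (f s t)); lra).
assert (HMg : 0 < Mg) by (unfold Mg; pose proof (Rabs_pos (g s t)); lra).
destruct (Df (eps / (3 * Mg))) as [d1 [Hd1 K1]]; [apply Rdiv_lt_0_compat; lra|].
destruct (Dg (eps / (3 * Mf))) as [d2 [Hd2 K2]]; [apply Rdiv_lt_0_compat; lra|].
set (d3 := eps / (6 * (Cf * Cg))).
assert (Hd3 : 0 < d3) by (unfold d3; apply Rdiv_lt_0_compat; nra).
exists (Rmin (Rmin df dg) (Rmin (Rmin d1 d2) d3)).
split; [repeat apply Rmin_glb_lt; assumption|].
intros h k Hh Hk.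
pose proof (Rmin_l (Rmin df dg) (Rmin (Rmin d1 d2) d3)).
pose proof (Rmin_r (Rmin df dg) (Rmin (Rmin d1 d2) d3)).
pose proof (Rmin_l df dg); pose proof (Rmin_r df dg).
pose proof (Rmin_l (Rmin d1 d2) d3); pose proof (Rmin_r (Rmin d1 d2) d3).
pose proof (Rmin_l d1 d2); pose proof (Rmin_r d1 d2).
specialize (Lf h k ltac:(lra) ltac:(lra)); specialize (Lg h k ltac:(lra) ltac:(lra)).
specialize (K1 h k ltac:(lra) ltac:(lra)); specialize (K2 h k ltac:(lra) ltac:(lra)).
set (ef := f (s + h) (t + k) - f s t - fs * h - ft * k) in K1.
set (eg := g (s + h) (t + k) - g s t - gs * h - gt * k) in K2.
set (Df' := f (s + h) (t + k) - f s t) in Lf.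
set (Dg' := g (s + h) (t + k) - g s t) in Lg.
set (n := Rabs h + Rabs k) in *.
replace (f (s + h) (t + k) * g (s + h) (t + k) - f s t * g s t
         - (fs * g s t + f s t * gs) * h - (ft * g s t + f s t * gt) * k)
  with (g s t * ef + f s t * eg + Df' * Dg') by (unfold ef, eg, Df', Dg'; ring).
assert (Hn : n < 2 * d3) by (unfold n; lra).
assert (Hn0 : 0 <= n) by (unfold n; pose proof (Rabs_pos h); pose proof (Rabs_pos k); lra).
assert (E1 : Rabs (g s t * ef) <= eps / 3 * n).
{ rewrite Rabs_mult. pose proof (Rabs_pos (g s t)); pose proof (Rabs_pos ef).
  apply Rle_trans with (Mg * (eps / (3 * Mg) * n)); [| right; field; lra].
  apply Rmult_le_compat; [lra | lra | unfold Mg; lra | exact K1]. }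
assert (E2 : Rabs (f s t * eg) <= eps / 3 * n).
{ rewrite Rabs_mult. pose proof (Rabs_pos (f s t)); pose proof (Rabs_pos eg).
  apply Rle_trans with (Mf * (eps / (3 * Mf) * n)); [| right; field; lra].
  apply Rmult_le_compat; [lra | lra | unfold Mf; lra | exact K2]. }
assert (E3 : Rabs (Df' * Dg') <= eps / 3 * n).
{ rewrite Rabs_mult. pose proof (Rabs_pos Df'); pose proof (Rabs_pos Dg').
  apply Rle_trans with ((Cf * n) * (Cg * n)); [now apply Rmult_le_compat|].
  assert (Cf * Cg * (2 * d3) = eps / 3) by (unfold d3; field; nra).
  assert (0 <= Cf * Cg * n) by (apply Rmult_le_pos; nra).
  nra. }
pose proof (Rabs_triang (g s t * ef + f s t * eg) (Df' * Dg')).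
pose proof (Rabs_triang (g s t * ef) (f s t * eg)).
unfold n in *. lra.
Qed.

Lemma derivable_pt_lim_error_bound F x l : derivable_pt_lim F x l ->
  forall eps, 0 < eps -> exists d, 0 < d /\
    forall h, Rabs h < d -> Rabs (F (x + h) - F x - l * h) <= eps * Rabs h.
Proof.
intros D eps Heps. destruct (D eps Heps) as [d Hd]. exists d; split; [apply cond_pos|].
intros h Hh. destruct (Req_dec h 0) as [->|Hn].
- rewrite Rplus_0_r, Rabs_R0. replace (F x - F x - l * 0) with 0 by ring.
  rewrite Rabs_R0; lra.
- specialize (Hd h Hn Hh).
  replace (F (x + h) - F x - l * h) with (h * ((F (x + h) - F x) / h - l)) by (field; auto).
  rewrite Rabs_mult. pose proof (Rabs_pos h). nra.
Qed.

Lemma diff2_comp_linear F a b s t l : derivable_pt_lim F (a * s + b * t) l ->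
  diff2 (fun x y => F (a * x + b * y)) s t (l * a) (l * b).
Proof.
intros D eps Heps.
set (M := Rabs a + Rabs b + 1).
assert (HM : 0 < M) by (unfold M; pose proof (Rabs_pos a); pose proof (Rabs_pos b); lra).
destruct (derivable_pt_lim_error_bound F _ l D (eps / M)) as [d [Hd K]];
  [apply Rdiv_lt_0_compat; lra|].
exists (d / (2 * M)); split; [apply Rdiv_lt_0_compat; lra|].
intros h k Hh Hk.
assert (Hm : Rabs (a * h + b * k) <= M * (Rabs h + Rabs k)).
{ eapply Rle_trans; [apply Rabs_triang|]. rewrite !Rabs_mult. unfold M.
  pose proof (Rabs_pos a); pose proof (Rabs_pos b); pose proof (Rabs_pos h); pose proof (Rabs_pos k).
  nra. }
assert (Hs : Rabs (a * h + b * k) < d).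
{ eapply Rle_lt_trans; [exact Hm|].
  apply Rlt_le_trans with (M * (d / (2 * M) + d / (2 * M))); [apply Rmult_lt_compat_l; lra|].
  right; field; lra. }
specialize (K _ Hs).
replace (a * (s + h) + b * (t + k)) with (a * s + b * t + (a * h + b * k)) by ring.
replace (F (a * s + b * t + (a * h + b * k)) - F (a * s + b * t) - l * a * h - l * b * k)
  with (F (a * s + b * t + (a * h + b * k)) - F (a * s + b * t) - l * (a * h + b * k)) by ring.
eapply Rle_trans; [exact K|].
apply Rle_trans with (eps / M * (M * (Rabs h + Rabs k))).
- apply Rmult_le_compat_l; [|exact Hm]. left; apply Rdiv_lt_0_compat; lra.
- right; field; lra.
Qed.

Lemma diff2_line_deriv f s t al be m fs ft :
  diff2 f (s + m * al) (t + m * be) fs ft ->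
  derivable_pt_lim (fun m => f (s + m * al) (t + m * be)) m (fs * al + ft * be).
Proof.
intros D eps Heps.
set (M := Rabs al + Rabs be + 1).
assert (HM : 0 < M) by (unfold M; pose proof (Rabs_pos al); pose proof (Rabs_pos be); lra).
destruct (D (eps / (2 * M))) as [d [Hd K]]; [apply Rdiv_lt_0_compat; lra|].
assert (Hd' : 0 < d / M) by (apply Rdiv_lt_0_compat; lra).
exists (mkposreal _ Hd'). simpl. intros h Hn Hh.
assert (Hp : 0 < Rabs h) by (now apply Rabs_pos_lt).
assert (HhM : Rabs h * M < d).
{ apply Rlt_le_trans with (d / M * M); [apply Rmult_lt_compat_r; lra | right; field; lra]. }
assert (Habs : Rabs h * Rabs al + Rabs h * Rabs be <= Rabs h * M).
{ unfold M; pose proof (Rabs_pos al); pose proof (Rabs_pos be); nra. }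
pose proof (Rabs_pos al); pose proof (Rabs_pos be).
specialize (K (h * al) (h * be)); rewrite !Rabs_mult in K.
specialize (K ltac:(nra) ltac:(nra)).
replace (s + (m + h) * al) with (s + m * al + h * al) by ring.
replace (t + (m + h) * be) with (t + m * be + h * be) by ring.
replace ((f (s + m * al + h * al) (t + m * be + h * be) - f (s + m * al) (t + m * be)) / h
         - (fs * al + ft * be))
  with ((f (s + m * al + h * al) (t + m * be + h * be) - f (s + m * al) (t + m * be)
         - fs * (h * al) - ft * (h * be)) / h) by (field; auto).
unfold Rdiv. rewrite Rabs_mult, Rabs_inv.
apply Rmult_lt_reg_r with (Rabs h); [exact Hp|].
rewrite Rmult_assoc, Rinv_l, Rmult_1_r by lra.
eapply Rle_lt_trans; [exact K|].
apply Rle_lt_trans with (eps * / (2 * M) * (M * Rabs h)).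
- apply Rmult_le_compat_l; [|lra]. left; apply Rmult_lt_0_compat; [lra|].
  apply Rinv_0_lt_compat; lra.
- replace (eps * / (2 * M) * (M * Rabs h)) with (eps * Rabs h / 2) by (field; lra). nra.
Qed.

Lemma diff2_partial_s f s t fs ft : diff2 f s t fs ft -> derivable_pt_lim (fun x => f x t) s fs.
Proof.
intros D.
assert (L := diff2_line_deriv f 0 t 1 0 s fs ft).
rewrite Rplus_0_l, Rmult_1_r, Rmult_0_r, Rplus_0_r in L.
replace fs with (fs * 1 + ft * 0) by ring.
eapply derivable_pt_lim_ext; [| exact (L D)].
intro x; simpl; now rewrite Rplus_0_l, Rmult_1_r, Rmult_0_r, Rplus_0_r.
Qed.

Lemma diff2_partial_t f s t fs ft : diff2 f s t fs ft -> derivable_pt_lim (fun y => f s y) t ft.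
Proof.
intros D.
assert (L := diff2_line_deriv f s 0 0 1 t fs ft).
rewrite Rplus_0_l, Rmult_1_r, Rmult_0_r, Rplus_0_r in L.
replace ft with (fs * 0 + ft * 1) by ring.
eapply derivable_pt_lim_ext; [| exact (L D)].
intro y; simpl; now rewrite Rplus_0_l, Rmult_1_r, Rmult_0_r, Rplus_0_r.
Qed.

Lemma diff2_const_on_segment f s t al be :
  (forall m, 0 <= m <= 1 -> exists fs ft,
     diff2 f (s + m * al) (t + m * be) fs ft /\ fs * al + ft * be = 0) ->
  f (s + al) (t + be) = f s t.
Proof.
intros Hd.
destruct (MVT_cor2 (fun m => f (s + m * al) (t + m * be)) (fun _ => 0) 0 1)
  as [m [Hm _]]; [lra| |].
- intros m Hm. destruct (Hd m Hm) as [fs [ft [D E]]]. rewrite <- E.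
  exact (diff2_line_deriv f s t al be m fs ft D).
- rewrite !Rmult_0_l, !Rmult_1_l, !Rplus_0_r in Hm. lra.
Qed.

Definition eventually_right (t0 : R) (P : R -> Prop) : Prop :=
  exists d, 0 < d /\ forall x, t0 < x < t0 + d -> P x.

Definition tends_right (f : R -> R) (t0 l : R) : Prop :=
  forall eta, 0 < eta -> eventually_right t0 (fun x => Rabs (f x - l) < eta).

Lemma eventually_right_and t0 (P Q : R -> Prop) :
  eventually_right t0 P -> eventually_right t0 Q -> eventually_right t0 (fun x => P x /\ Q x).
Proof.
intros [d1 [Hd1 H1]] [d2 [Hd2 H2]]. exists (Rmin d1 d2); split; [now apply Rmin_glb_lt|].
intros x Hx. pose proof (Rmin_l d1 d2); pose proof (Rmin_r d1 d2).
split; [apply H1 | apply H2]; lra.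
Qed.

Lemma eventually_right_mono t0 (P Q : R -> Prop) :
  (forall x, P x -> Q x) -> eventually_right t0 P -> eventually_right t0 Q.
Proof. intros PQ [d [Hd H]]. exists d; split; [exact Hd|]. intros x Hx. now apply PQ, H. Qed.

Lemma mean_value_bound_right (f f' : R -> R) t0 e L : 0 <= e ->
  eventually_right t0 (fun x => derivable_pt_lim f x (f' x) /\ Rabs (f' x) <= e) ->
  tends_right f t0 L ->
  eventually_right t0 (fun x => Rabs (f x - L) <= e * (x - t0)).
Proof.
intros He [d [Hd Hder]] Hlim. exists d; split; [exact Hd|]. intros x Hx.
apply Rle_plus_epsilon. intros eta Heta.
destruct (Hlim eta Heta) as [dl [Hdl Kl]].
set (y := t0 + Rmin dl (x - t0) / 2).
assert (Hm : 0 < Rmin dl (x - t0)) by (apply Rmin_glb_lt; lra).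
pose proof (Rmin_l dl (x - t0)); pose proof (Rmin_r dl (x - t0)).
destruct (MVT_cor2 f f' y x) as [m [Hm1 Hm2]]; [unfold y; lra| |].
{ intros m Hm'. apply Hder. unfold y in Hm'; lra. }
assert (Hfm : Rabs (f' m) <= e) by (apply Hder; unfold y in Hm2; lra).
specialize (Kl y ltac:(unfold y; lra)).
replace (f x - L) with ((f x - f y) + (f y - L)) by ring.
eapply Rle_trans; [apply Rabs_triang|]. rewrite Hm1, Rabs_mult, (Rabs_right (x - y))
  by (unfold y; lra).
assert (Rabs (f' m) * (x - y) <= e * (x - t0)) by (unfold y in *; nra). lra.
Qed.

Lemma eventually_right_const (f : R -> R) t0 L :
  eventually_right t0 (fun x => derivable_pt_lim f x 0) -> tends_right f t0 L ->
  eventually_right t0 (fun x => f x = L).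
Proof.
intros Hder Hlim.
assert (B := mean_value_bound_right f (fun _ => 0) t0 0 L (Rle_refl 0)).
refine (eventually_right_mono _ _ _ _ (B _ Hlim)).
- intros x Hx. rewrite Rmult_0_l in Hx. apply Rminus_diag_uniq.
  destruct (Req_dec (f x - L) 0) as [E|E]; [exact E|].
  pose proof (Rabs_pos_lt _ E); lra.
- refine (eventually_right_mono _ _ _ _ Hder). intros x Hx. rewrite Rabs_R0. split; [exact Hx | lra].
Qed.

Lemma diff2_tends_right_t f s t fs ft :
  diff2 f s t fs ft -> tends_right (fun y => f s y) t (f s t).
Proof.
intros D eta Heta.
destruct (diff2_local_lipschitz f s t fs ft D) as [d [Hd L]].
set (C := Rabs fs + Rabs ft + 1) in L.
assert (HC : 0 < C) by (unfold C; pose proof (Rabs_pos fs); pose proof (Rabs_pos ft); lra).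
exists (Rmin d (eta / (2 * C))); split; [apply Rmin_glb_lt; [exact Hd | apply Rdiv_lt_0_compat; lra]|].
intros y Hy. pose proof (Rmin_l d (eta / (2 * C))); pose proof (Rmin_r d (eta / (2 * C))).
specialize (L 0 (y - t) ltac:(rewrite Rabs_R0; lra) ltac:(rewrite Rabs_right; lra)).
rewrite Rplus_0_r, Rabs_R0, Rplus_0_l, (Rabs_right (y - t)) in L by lra.
replace (t + (y - t)) with y in L by ring.
eapply Rle_lt_trans; [exact L|].
apply Rle_lt_trans with (C * (eta / (2 * C))); [apply Rmult_le_compat_l; lra|].
replace (C * (eta / (2 * C))) with (eta / 2) by (field; lra). lra.
Qed.

Lemma graph_chain_rule (u : R -> R -> R) (X Z : R -> R) y0 a b x p q us ut :
  a < x < b -> (forall y, a < y < b -> Z y = u (X y) y0) ->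
  derivable_pt_lim X x p -> derivable_pt_lim Z x q -> diff2 u (X x) y0 us ut ->
  q = us * p.
Proof.
intros Hx Hgraph DX DZ Du.
assert (Dcomp := derivable_pt_lim_comp X (fun xi => u xi y0) x p us DX (diff2_partial_s _ _ _ _ _ Du)).
apply (uniqueness_limite Z x).
- exact DZ.
- apply (derivable_pt_lim_locally_ext (comp (fun xi => u xi y0) X) Z x a b _ Hx); [|exact Dcomp].
  intros y Hy. symmetry. now apply Hgraph.
Qed.

Lemma vanishing_speed_path_leaves_graph (u ux uy : R -> R -> R) (X Y Z P : R -> R)
    (t0 x0 y0 uxx uxy : R) :
  diff2 ux x0 y0 uxx uxy ->
  tends_right X t0 x0 -> tends_right Y t0 y0 ->
  (forall e, 0 < e -> eventually_right t0 (fun x => P x <= e)) ->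
  eventually_right t0 (fun x => 0 < P x /\
    derivable_pt_lim X x (P x) /\ derivable_pt_lim Y x 0 /\
    derivable_pt_lim Z x (- x * P x) /\
    Z x = u (X x) (Y x) /\ diff2 u (X x) (Y x) (ux (X x) (Y x)) (uy (X x) (Y x))) ->
  False.
Proof.
intros Dux HXlim HYlim HPsmall Hpath.
destruct (diff2_local_lipschitz _ _ _ _ _ Dux) as [du [Hdu Lux]].
set (C := Rabs uxx + Rabs uxy + 1) in Lux.
assert (HC : 0 < C) by (unfold C; pose proof (Rabs_pos uxx); pose proof (Rabs_pos uxy); lra).
set (e := 1 / (4 * C)).
assert (He : 0 < e) by (unfold e; apply Rdiv_lt_0_compat; lra).
assert (Hnear := eventually_right_and _ _ _ Hpath
                   (eventually_right_and _ _ _ (HPsmall e He) (HXlim du Hdu))).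
assert (HY : eventually_right t0 (fun x => Y x = y0)).
{ apply (eventually_right_const Y t0 y0); [|exact HYlim].
  refine (eventually_right_mono _ _ _ _ Hnear). intros x Hx; apply Hx. }
assert (HX : eventually_right t0 (fun x => Rabs (X x - x0) <= e * (x - t0))).
{ apply (mean_value_bound_right X P t0 e x0 (Rlt_le _ _ He)); [|exact HXlim].
  refine (eventually_right_mono _ _ _ _ Hnear).
  intros x [[HP [DX _]] [HPe _]]. rewrite Rabs_right by lra. now split. }
destruct (eventually_right_and _ _ _ Hnear (eventually_right_and _ _ _ HY HX)) as [d [Hd Hall]].
(* [C e = 1/4]: the graph forces [ux (X x) y0 = - x], which moves by [x - t0]
   while [X x] stays within [e (x - t0)] of [x0]. *)
assert (Hgrad : forall x, t0 < x < t0 + d -> Rabs (- x - ux x0 y0) <= (x - t0) / 4).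
{ intros x Hx.
  destruct (Hall x Hx) as [[[HP [DX [_ [DZ [_ Du]]]]] [_ Hdu_x]] [HYx HXx]].
  rewrite HYx in Du.
  assert (Hslope : - x * P x = ux (X x) y0 * P x).
  { apply (graph_chain_rule u X Z y0 t0 (t0 + d) x (P x) _ _ (uy (X x) y0) Hx); try assumption.
    intros y Hy. destruct (Hall y Hy) as [[[_ [_ [_ [_ [HZy _]]]]] _] [HYy _]].
    now rewrite HZy, HYy. }
  apply Rmult_eq_reg_r in Hslope; [|lra].
  specialize (Lux (X x - x0) 0 Hdu_x ltac:(rewrite Rabs_R0; lra)).
  rewrite Rplus_0_r, Rabs_R0, Rplus_0_r in Lux. replace (x0 + (X x - x0)) with (X x) in Lux by ring.
  rewrite Hslope.
  apply Rle_trans with (C * (e * (x - t0))).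
  + eapply Rle_trans; [exact Lux|]. apply Rmult_le_compat_l; lra.
  + right. unfold e. field. lra. }
pose proof (Hgrad (t0 + d / 2) ltac:(lra)) as G1. pose proof (Hgrad (t0 + d / 4) ltac:(lra)) as G2.
pose proof (Rle_abs (- (- (t0 + d / 2) - ux x0 y0))). pose proof (Rle_abs (- (t0 + d / 4) - ux x0 y0)).
rewrite Rabs_Ropp in *. lra.
Qed.

Lemma RInt_derivable (phi : R -> R) lo hi a x :
  lo < a < hi -> lo < x < hi -> (forall u, lo < u < hi -> continuous phi u) ->
  derivable_pt_lim (fun y => RInt phi a y) x (phi x).
Proof.
intros Ha Hx Hc.
apply is_derive_Reals, (is_derive_RInt phi (fun y => RInt phi a y) a x); [|now apply Hc].
assert (He : 0 < Rmin (x - lo) (hi - x)) by (apply Rmin_glb_lt; lra).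
exists (mkposreal _ He). intros y Hy.
change (Rabs (y - x) < Rmin (x - lo) (hi - x)) in Hy.
pose proof (Rmin_l (x - lo) (hi - x)); pose proof (Rmin_r (x - lo) (hi - x)).
apply Rabs_def2 in Hy.
apply (@RInt_correct R_CompleteNormedModule), (@ex_RInt_continuous R_CompleteNormedModule).
intros z Hz. apply Hc. unfold Rmin, Rmax in Hz. destruct (Rle_dec a y); lra.
Qed.

Lemma in_disk_segment c r p q m :
  in_disk c r p -> in_disk c r q -> 0 <= m <= 1 ->
  in_disk c r (fst p + m * (fst q - fst p), snd p + m * (snd q - snd p)).
Proof.
unfold in_disk; simpl. intros Hp Hq Hm.
set (a1 := fst p - fst c) in *; set (a2 := snd p - snd c) in *.
set (b1 := fst q - fst c) in *; set (b2 := snd q - snd c) in *.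
replace (fst p + m * (fst q - fst p) - fst c) with (a1 + m * (b1 - a1)) by (unfold a1, b1; ring).
replace (snd p + m * (snd q - snd p) - snd c) with (a2 + m * (b2 - a2)) by (unfold a2, b2; ring).
replace ((a1 + m * (b1 - a1)) ^ 2 + (a2 + m * (b2 - a2)) ^ 2)
  with ((1 - m) * (a1 ^ 2 + a2 ^ 2) + m * (b1 ^ 2 + b2 ^ 2)
        - m * (1 - m) * ((a1 - b1) ^ 2 + (a2 - b2) ^ 2)) by ring.
assert (0 <= m * (1 - m) * ((a1 - b1) ^ 2 + (a2 - b2) ^ 2)).
{ apply Rmult_le_pos; [nra|]. pose proof (pow2_ge_0 (a1 - b1)); pose proof (pow2_ge_0 (a2 - b2)); lra. }
assert (0 < (1 - m) * (r ^ 2 - (a1 ^ 2 + a2 ^ 2)) + m * (r ^ 2 - (b1 ^ 2 + b2 ^ 2)))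
  by (destruct (Rle_dec m (1 / 2)); nra).
lra.
Qed.

(* The point of the line through [c] with direction [(1, sg)] whose null
   coordinate [s + sg t] equals [u]. *)
Definition null_point (c : SC) (sg u : R) : SC :=
  (fst c + (u - fst c - sg * snd c) / 2, snd c + sg * ((u - fst c - sg * snd c) / 2)).

Lemma in_disk_null_point c rho sg u : sg * sg = 1 ->
  in_disk c rho (null_point c sg u) <-> (u - fst c - sg * snd c) ^ 2 < 2 * rho ^ 2.
Proof.
intros Hsg. unfold in_disk, null_point; cbn [fst snd].
set (v := u - fst c - sg * snd c).
replace ((fst c + v / 2 - fst c) ^ 2 + (snd c + sg * (v / 2) - snd c) ^ 2)
  with ((1 + sg * sg) * v ^ 2 / 4) by field.
rewrite Hsg. lra.
Qed.

Lemma in_band a rho u : 0 < rho ->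
  (u - a) ^ 2 < 2 * rho ^ 2 <-> a - rho * sqrt 2 < u < a + rho * sqrt 2.
Proof.
intros Hrho. pose proof (sqrt_sqrt 2 ltac:(lra)). assert (0 < sqrt 2) by (apply sqrt_lt_R0; lra).
set (w := rho * sqrt 2).
assert (0 < w) by (unfold w; nra). assert (w * w = 2 * rho ^ 2) by (unfold w; nra).
split; intros; nra.
Qed.

Lemma null_point_in_disk c rho sg z : sg * sg = 1 ->
  in_disk c rho z -> in_disk c rho (null_point c sg (fst z + sg * snd z)).
Proof.
intros Hsg Hz. apply in_disk_null_point; [exact Hsg|]. unfold in_disk in Hz.
set (a := fst z - fst c) in *; set (b := snd z - snd c) in *.
replace (fst z + sg * snd z - fst c - sg * snd c) with (a + sg * b) by (unfold a, b; ring).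
assert (E : (a + sg * b) ^ 2 + (a - sg * b) ^ 2 = 2 * (a ^ 2 + sg * sg * b ^ 2)) by ring.
rewrite Hsg in E. pose proof (pow2_ge_0 (a - sg * b)). lra.
Qed.

Lemma null_invariant (f : SC -> R) c rho sg : sg * sg = 1 ->
  (forall z, in_disk c rho z ->
     exists fs, diff2 (fun x y => f (x, y)) (fst z) (snd z) fs (sg * fs)) ->
  forall z, in_disk c rho z -> f z = f (null_point c sg (fst z + sg * snd z)).
Proof.
intros Hsg Hd z Hz.
assert (Hq := null_point_in_disk c rho sg z Hsg Hz).
set (q := null_point c sg (fst z + sg * snd z)) in *.
destruct z as [s t]. cbn [fst snd] in *.
rewrite (surjective_pairing q).
replace (fst q) with (s + (fst q - s)) by ring. replace (snd q) with (t + (snd q - t)) by ring.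
symmetry. apply (diff2_const_on_segment (fun x y => f (x, y))).
intros m Hm. destruct (Hd _ (in_disk_segment c rho (s, t) q m Hz Hq Hm)) as [fs D].
exists fs, (sg * fs). split; [exact D|].
unfold q, null_point; cbn [fst snd].
replace (fs * (fst c + (s + sg * t - fst c - sg * snd c) / 2 - s)
         + sg * fs * (snd c + sg * ((s + sg * t - fst c - sg * snd c) / 2) - t))
  with (fs * (sg * sg - 1) * (s + sg * t - fst c - sg * snd c) / 2) by field.
rewrite Hsg. field.
Qed.

Lemma null_restriction_continuous (f : SC -> R) c rho sg u :
  (forall z, in_disk c rho z ->
     exists fs ft, diff2 (fun x y => f (x, y)) (fst z) (snd z) fs ft) ->
  in_disk c rho (null_point c sg u) -> continuous (fun m => f (null_point c sg m)) u.
Proof.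
intros Hd Hu.
assert (E : forall m, null_point c sg m =
   (fst c - (fst c + sg * snd c) / 2 + m * / 2, snd c - sg * ((fst c + sg * snd c) / 2) + m * (sg / 2)))
  by (intro m; unfold null_point; f_equal; field).
destruct (Hd _ Hu) as [fs [ft D]]. rewrite E in D; cbn [fst snd] in D.
apply (@ex_derive_continuous R_AbsRing R_NormedModule).
exists (fs * / 2 + ft * (sg / 2)). apply is_derive_Reals.
eapply derivable_pt_lim_ext; [| exact (diff2_line_deriv _ _ _ _ _ _ _ _ D)].
intro m; cbn beta. now rewrite E.
Qed.

Definition null_primitive (f : SC -> R) (c : SC) (sg : R) (z : SC) : R :=
  RInt (fun u => f (null_point c sg u)) (fst c + sg * snd c) (fst z + sg * snd z).

Lemma null_primitive_diff2 (f : SC -> R) c rho sg z : 0 < rho -> sg * sg = 1 ->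
  (forall z, in_disk c rho z ->
     exists fs, diff2 (fun x y => f (x, y)) (fst z) (snd z) fs (sg * fs)) ->
  in_disk c rho z ->
  diff2 (fun x y => null_primitive f c sg (x, y)) (fst z) (snd z) (f z) (sg * f z).
Proof.
intros Hrho Hsg Hd Hz.
set (a := fst c + sg * snd c). set (w := rho * sqrt 2).
assert (Hband : forall u, in_disk c rho (null_point c sg u) <-> a - w < u < a + w).
{ intro u. unfold w. rewrite (in_disk_null_point c rho sg u Hsg), <- (in_band a rho u Hrho).
  unfold a. replace (u - fst c - sg * snd c) with (u - (fst c + sg * snd c)) by ring. reflexivity. }
assert (Hw : 0 < w) by (apply Rmult_lt_0_compat; [exact Hrho | apply sqrt_lt_R0; lra]).
assert (Hder : derivable_pt_lim (fun u => RInt (fun m => f (null_point c sg m)) a u)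
                 (1 * fst z + sg * snd z) (f z)).
{ rewrite Rmult_1_l, (null_invariant f c rho sg Hsg Hd z Hz).
  apply (RInt_derivable (fun m => f (null_point c sg m)) (a - w) (a + w));
    [lra | now apply Hband, null_point_in_disk |].
  intros u Hu. apply (null_restriction_continuous f c rho); [| now apply Hband].
  intros z' Hz'. destruct (Hd z' Hz') as [fs D]. now exists fs, (sg * fs). }
apply (diff2_ext (fun x y => RInt (fun m => f (null_point c sg m)) a (1 * x + sg * y))).
- intros x y. unfold null_primitive. now rewrite Rmult_1_l.
- eapply diff2_eq; [| | exact (diff2_comp_linear _ 1 sg _ _ _ Hder)]; ring.
Qed.

Lemma omega_s_eq A A' z :
  omega_s A A' z = (snd (A' z), -1, fst (A z) - snd z * snd (A' z)).
Proof.
unfold omega_s, omega_dir, r3_scale, sc3_Im, sc3_cross, sc3_add, sc3_conj, sc3_scale, Phi, Phi_z,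
  r1, r2, r3, v1, v2, v3, sc_sub, sc_mul, sc_add, sc_conj, sc_Im, sc_j, sc_of_R; cbn.
f_equal; [f_equal|]; field.
Qed.

Lemma omega_t_eq A A' z :
  omega_t A A' z = (fst (A' z), 0, - snd z * fst (A' z)).
Proof.
unfold omega_t, omega_dir, r3_scale, sc3_Im, sc3_cross, sc3_add, sc3_conj, sc3_scale, Phi, Phi_z,
  r1, r2, r3, v1, v2, v3, sc_sub, sc_mul, sc_add, sc_conj, sc_Im, sc_j, sc_of_R; cbn.
f_equal; [f_equal|]; field.
Qed.

Definition null_component (A : SC -> SC) (sg : R) (w : SC) : R := fst (A w) + sg * snd (A w).

Lemma null_component_diff2 D A A' sg : sg * sg = 1 -> split_holo_deriv D A A' ->
  forall z, D z -> exists fs,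
    diff2 (fun x y => null_component A sg (x, y)) (fst z) (snd z) fs (sg * fs).
Proof.
intros Hsg HA z Hz. destruct (HA z Hz) as [D1 D2].
exists (fst (A' z) + sg * snd (A' z)).
eapply diff2_eq; [reflexivity | | exact (diff2_plus _ _ _ _ _ _ _ _ D1 (diff2_scal sg _ _ _ _ _ D2))].
replace (sg * (fst (A' z) + sg * snd (A' z))) with (sg * fst (A' z) + sg * sg * snd (A' z)) by ring.
rewrite Hsg. ring.
Qed.

Definition split_real_primitive (A : SC -> SC) (c z : SC) : R :=
  / 2 * (null_primitive (null_component A 1) c 1 z
         + null_primitive (null_component A (-1)) c (-1) z).

Lemma split_real_primitive_diff2 c rho A A' z : 0 < rho ->
  split_holo_deriv (in_disk c rho) A A' -> in_disk c rho z ->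
  diff2 (fun x y => split_real_primitive A c (x, y)) (fst z) (snd z) (fst (A z)) (snd (A z)).
Proof.
intros Hrho HA Hz.
assert (P := fun sg Hsg => null_primitive_diff2 (null_component A sg) c rho sg z Hrho Hsg
                             (null_component_diff2 _ A A' sg Hsg HA) Hz).
assert (Pp := P 1 ltac:(ring)); assert (Pm := P (-1) ltac:(ring)).
eapply diff2_eq; [| | exact (diff2_scal (/ 2) _ _ _ _ _ (diff2_plus _ _ _ _ _ _ _ _ Pp Pm))];
  unfold null_component; field.
Qed.

Definition split_psi (A : SC -> SC) (c z : SC) : R3 :=
  (snd (A z), - fst z, - snd z * snd (A z) + split_real_primitive A c z).

Lemma split_psi_is_psi c rho A A' : 0 < rho ->
  split_holo_deriv (in_disk c rho) A A' -> is_psi (in_disk c rho) A A' (split_psi A c).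
Proof.
intros Hrho HA [s t] Hz. rewrite omega_s_eq, omega_t_eq. unfold r1, r2, r3, split_psi; cbn [fst snd].
destruct (HA _ Hz) as [_ Dsnd]; cbn [fst snd] in Dsnd.
split; [exact Dsnd | split].
- apply (diff2_ext (fun x y => -1 * x + 0 * y)); [intros; ring | apply diff2_linear].
- assert (Dt := diff2_linear 0 (-1) s t).
  assert (D := diff2_plus _ _ _ _ _ _ _ _ (diff2_mult _ _ _ _ _ _ _ _ Dt Dsnd)
                 (split_real_primitive_diff2 c rho A A' (s, t) Hrho HA Hz)).
  apply (diff2_ext (fun x y => (0 * x + -1 * y) * snd (A (x, y)) + split_real_primitive A c (x, y)));
    [intros; ring|].
  eapply diff2_eq; [| | exact D]; cbv beta; ring.
Qed.

Lemma sc_mul_self_fst_pos (w : SC) : w <> sc_zero -> 0 < fst (sc_mul w w).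
Proof.
destruct w as [a b]; unfold sc_mul, sc_zero; cbn [fst snd]. intros Hw.
destruct (Req_dec a 0) as [->|Ha]; [destruct (Req_dec b 0) as [->|Hb]|].
- now contradiction Hw.
- nra.
- nra.
Qed.

Lemma is_psi_vertical U A A' psi s0 x : is_psi U A A' psi -> U (s0, x) ->
  derivable_pt_lim (fun y => r1 (psi (s0, y))) x (fst (A' (s0, x))) /\
  derivable_pt_lim (fun y => r2 (psi (s0, y))) x 0 /\
  derivable_pt_lim (fun y => r3 (psi (s0, y))) x (- x * fst (A' (s0, x))).
Proof.
intros Hpsi HU. destruct (Hpsi _ HU) as [D1 [D2 D3]].
rewrite omega_t_eq in D1, D2, D3. cbn [r1 r2 r3 fst snd] in D1, D2, D3.
exact (conj (diff2_partial_t _ _ _ _ _ D1)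
        (conj (diff2_partial_t _ _ _ _ _ D2) (diff2_partial_t _ _ _ _ _ D3))).
Qed.

Lemma eventually_right_in_disk c r s t :
  in_disk c r (s, t) -> eventually_right t (fun x => in_disk c r (s, x)).
Proof.
unfold in_disk; cbn [fst snd]. intros Hin.
set (b := t - snd c) in *. set (g := r ^ 2 - ((s - fst c) ^ 2 + b ^ 2)).
assert (Hg : 0 < g) by (unfold g; lra).
assert (HM : 0 < 2 * Rabs b + 1) by (pose proof (Rabs_pos b); lra).
exists (Rmin 1 (g / (2 * Rabs b + 1))).
split; [apply Rmin_glb_lt; [lra | now apply Rdiv_lt_0_compat]|].
intros x Hx. pose proof (Rmin_l 1 (g / (2 * Rabs b + 1))); pose proof (Rmin_r 1 (g / (2 * Rabs b + 1))).
replace (x - snd c) with (b + (x - t)) by (unfold b; ring).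
assert (Hk : (x - t) * (2 * Rabs b + 1) < g).
{ apply Rlt_le_trans with (g / (2 * Rabs b + 1) * (2 * Rabs b + 1)); [apply Rmult_lt_compat_r; lra|].
  right; field; lra. }
pose proof (Rle_abs b); pose proof (Rle_abs (- b)); rewrite Rabs_Ropp in *.
unfold g in Hk. nra.
Qed.

Lemma eventually_right_punctured_vertical c rho s0 t0 dl :
  in_disk c rho (s0, t0) -> 0 < dl ->
  eventually_right t0 (fun x =>
    (in_disk c rho (s0, x) /\ (s0, x) <> (s0, t0)) /\ in_disk (s0, t0) dl (s0, x)).
Proof.
intros Hz0 Hdl.
assert (Hcentre : in_disk (s0, t0) dl (s0, t0)) by (unfold in_disk; cbn [fst snd]; nra).
apply eventually_right_and; [apply eventually_right_and|].
- now apply eventually_right_in_disk.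
- exists 1; split; [lra|]. intros x Hx E. injection E. lra.
- now apply eventually_right_in_disk.
Qed.

Lemma sum_squares_small (f g : R -> R) t0 :
  tends_right f t0 0 -> tends_right g t0 0 ->
  forall e, 0 < e -> eventually_right t0 (fun x => f x * f x + g x * g x <= e).
Proof.
intros Tf Tg e He.
set (eta := Rmin 1 (e / 2)).
assert (Heta : 0 < eta) by (apply Rmin_glb_lt; lra).
assert (eta <= 1) by apply Rmin_l. assert (eta <= e / 2) by apply Rmin_r.
refine (eventually_right_mono _ _ _ _ (eventually_right_and _ _ _ (Tf eta Heta) (Tg eta Heta))).
intros x [Hf Hg]. rewrite Rminus_0_r in Hf, Hg.
rewrite <- (Rabs_pos_eq (f x * f x)), <- (Rabs_pos_eq (g x * g x)), !Rabs_mult by apply Rle_0_sqr.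
pose proof (Rabs_pos (f x)); pose proof (Rabs_pos (g x)).
assert (Rabs (f x) * Rabs (f x) <= Rabs (f x)) by nra.
assert (Rabs (g x) * Rabs (g x) <= Rabs (g x)) by nra.
lra.
Qed.

Lemma isolated_zero_nonremovable c rho A A' H z0 psi :
  split_holomorphic (in_disk c rho) H ->
  (forall z, in_disk c rho z -> A' z = sc_mul (H z) (H z)) ->
  isolated_zero (in_disk c rho) H z0 ->
  is_psi (fun z => in_disk c rho z /\ z <> z0) A A' psi ->
  nonremovable_singularity (fun z => in_disk c rho z /\ z <> z0) psi z0.
Proof.
intros [H' HH'] HA' [Hz0 [HH0 [ri [Hri Hiso]]]] Hpsi
  [r [p0 [Om [u [Hr [_ [[ux [uy [uxx [uxy [uyx [uyy Hh]]]]]] [HOm0 [_ [Hcont Hgraph]]]]]]]]]].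
destruct z0 as [s0 t0].
assert (Hlim : forall eta, 0 < eta -> eventually_right t0 (fun x =>
          Rabs (r1 (psi (s0, x)) - r1 p0) < eta /\ Rabs (r2 (psi (s0, x)) - r2 p0) < eta)).
{ intros eta Heta. destruct (Hcont eta Heta) as [dl [Hdl K]].
  refine (eventually_right_mono _ _ _ _ (eventually_right_punctured_vertical _ _ _ _ _ Hz0 Hdl)).
  intros x [HU Hin]. destruct (K _ HU Hin) as [K1 [K2 _]]. now split. }
(* On the vertical segment above [z0], [fst A' = |H|^2] is the speed of [r1 psi]. *)
assert (Hspeed : forall e, 0 < e -> eventually_right t0 (fun x => fst (A' (s0, x)) <= e)).
{ intros e He. destruct (HH' _ Hz0) as [D1 D2]; cbn [fst snd] in D1, D2.
  assert (T1 := diff2_tends_right_t _ _ _ _ _ D1). assert (T2 := diff2_tends_right_t _ _ _ _ _ D2).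
  cbn beta in T1, T2. rewrite HH0 in T1, T2.
  refine (eventually_right_mono _ _ _ _ (eventually_right_and _ _ _ (sum_squares_small _ _ _ T1 T2 e He)
            (eventually_right_punctured_vertical _ _ _ _ 1 Hz0 ltac:(lra)))).
  intros x [Hx [[Hin _] _]]. now rewrite (HA' _ Hin). }
apply (vanishing_speed_path_leaves_graph u ux uy
         (fun x => r1 (psi (s0, x))) (fun x => r2 (psi (s0, x))) (fun x => r3 (psi (s0, x)))
         (fun x => fst (A' (s0, x))) t0 (r1 p0) (r2 p0) (uxx (r1 p0) (r2 p0)) (uxy (r1 p0) (r2 p0))).
- now destruct (Hh _ _ HOm0) as [_ [Dux _]].
- intros eta Heta. refine (eventually_right_mono _ _ _ _ (Hlim eta Heta)). now intros x [].
- intros eta Heta. refine (eventually_right_mono _ _ _ _ (Hlim eta Heta)). now intros x [].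
- exact Hspeed.
- refine (eventually_right_mono _ _ _ _ (eventually_right_and _ _ _
            (eventually_right_punctured_vertical _ _ _ _ _ Hz0 Hri)
            (eventually_right_punctured_vertical _ _ _ _ _ Hz0 Hr))).
  intros x [[[Hin Hne] Hin_ri] [HU Hin_r]].
  destruct (is_psi_vertical _ _ _ _ s0 x Hpsi HU) as [DX [DY DZ]].
  destruct (Hgraph _ HU Hin_r) as [HOm HZ].
  destruct (Hh _ _ HOm) as [Du _].
  repeat split; try assumption.
  rewrite (HA' _ Hin). now apply sc_mul_self_fst_pos, Hiso.
Qed.

Theorem mainTheorem5 (c : SC) (rho : R) (A A' H : SC -> SC) (z0 : SC) :
  0 < rho ->
  split_holo_deriv (in_disk c rho) A A' ->
  split_holomorphic (in_disk c rho) H ->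
  (forall z, in_disk c rho z -> A' z = sc_mul (H z) (H z)) ->
  isolated_zero (in_disk c rho) H z0 ->
  (exists psi, is_psi (fun z => in_disk c rho z /\ z <> z0) A A' psi) /\
  (forall psi, is_psi (fun z => in_disk c rho z /\ z <> z0) A A' psi ->
     nonremovable_singularity (fun z => in_disk c rho z /\ z <> z0) psi z0).
Proof.
intros Hrho HA HH HA' Hzero. split.
- exists (split_psi A c). intros z [Hz _]. now apply (split_psi_is_psi c rho A A').
- intros psi Hpsi. exact (isolated_zero_nonremovable c rho A A' H z0 psi HH HA' Hzero Hpsi).
Qed.
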